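(* For every process $P$ and session type $S$ such that $\emptyset\cdot\emptyset\vdash P:S$, and every trace $t$ such that $\langle P;[\![S]\!]\rangle \xRightarrow{t} \langle P';M'\rangle$ where $\langle P';M'\rangle$ has no outgoing transition and $P'\neq\mathbf{0}$, we have $M'=\mathsf{no}_E$.
   Context: Values $v,u,w$ (including tuples), value variables $x,y,z$, process variables $X,Y$; $a$ ranges over values and value variables. Boolean predicates $A$ include $\mathsf{tt},\mathsf{ff}$, equalities/comparisons of values, conjunction, negation, and for each base type $\mathsf{B}$ a predicate $\mathsf{isValue}_{\mathsf{B}}(v)$ that evaluates to $\mathsf{tt}$ if $v$ is of type $\mathsf{B}$ and to $\mathsf{ff}$ otherwise; $A\Downarrow\mathsf{tt}$ / $A\Downarrow\mathsf{ff}$ denote evaluation. Predicates are type-checked by standard rules ($\Gamma\vdash A:\mathsf{Bool}$). Processes: $P,Q ::= \triangleleft \mathtt{l}(a).P \mid \triangleright\{\mathtt{l}_i(x_i).P_i\}_{i\in I} \mid \mu_X.P \mid X \mid \mathsf{if}\ A\ \mathsf{then}\ P\ \mathsf{else}\ Q \mid \mathbf{0}$, with guarded recursion. Process transitions: $\mu_X.P \xrightarrow{\tau} P[\mu_X.P/X]$; $\triangleleft\mathtt{l}(v).P \xrightarrow{\triangleleft \mathtt{l}(v)} P$; $\triangleright\{\mathtt{l}_i(x_i).P_i\}_{i\in I} \xrightarrow{\triangleright \mathtt{l}_j(v)} P_j[v/x_j]$ for $j\in I$; $\mathsf{if}\ A\ \mathsf{then}\ P\ \mathsf{else}\ Q \xrightarrow{\tau}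 P$ if $A\Downarrow\mathsf{tt}$ and $\xrightarrow{\tau} Q$ if $A\Downarrow\mathsf{ff}$. Base types $\mathsf{B} ::= \mathsf{Int}\mid\mathsf{Str}\mid\mathsf{Bool}\mid\dots\mid(\mathsf{B},\mathsf{B})$. Session types: $S ::= \oplus\{!\mathtt{l}_i(\mathsf{B}_i).S_i\}_{i\in I} \mid \&\{?\mathtt{l}_i(\mathsf{B}_i).S_i\}_{i\in I} \mid \mathsf{rec}\ X.S \mid X \mid \mathsf{end}$, with $I\neq\emptyset$, labels pairwise distinct, guarded recursion; types are equi-recursive. Typing with $\Theta$ (process variables to session types) and $\Gamma$ (value variables to base types): $\Gamma\vdash x:\mathsf{B}$ if $\Gamma(x)=\mathsf{B}$; $\Gamma\vdash v:\mathsf{B}$ if $v\in\mathsf{B}$. (tBra) if for all $i\in I$, $\Theta\cdot\Gamma,x_i:\mathsf{B}_i\vdash P_i:S_i$, then $\Theta\cdot\Gamma\vdash \triangleright\{\mathtt{l}_i(x_i).P_i\}_{i\in I\cup J} : \&\{?\mathtt{l}_i(\mathsf{B}_i).S_i\}_{i\in I}$; (tSel) if there is $i\in I$ with $\mathtt{l}=\mathtt{l}_i$, $\Gamma\vdash a:\mathsf{B}_i$, $\Theta\cdot\Gamma\vdash P:S_i$, then $\Theta\cdot\Gamma\vdash \triangleleft\mathtt{l}(a).P : \oplus\{!\mathtt{l}_i(\mathsf{B}_i).S_i\}_{i\in I}$; (tRec) $\Theta,X:S\cdot\Gamma\vdash P:S$ implies $\Theta\cdot\Gamma\vdash\mu_X.P:S$;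 (tPVar) $\Theta(X)=S$ implies $\Theta\cdot\Gamma\vdash X:S$; (tIf) $\Gamma\vdash A:\mathsf{Bool}$, $\Theta\cdot\Gamma\vdash P:S$, $\Theta\cdot\Gamma\vdash Q:S$ imply $\Theta\cdot\Gamma\vdash \mathsf{if}\ A\ \mathsf{then}\ P\ \mathsf{else}\ Q:S$; (tNil) $\Theta\cdot\Gamma\vdash\mathbf{0}:\mathsf{end}$. Monitors: $M,N ::= \triangleleft\mathtt{l}(a).M \mid \triangleright\{\mathtt{l}_i(x_i).M_i\}_{i\in I} \mid \blacktriangle\mathtt{l}(a).M \mid \blacktriangledown\{\mathtt{l}_i(x_i).M_i\}_{i\in I} \mid \mu_X.M \mid X \mid \mathsf{if}\ A\ \mathsf{then}\ M\ \mathsf{else}\ N \mid \mathbf{0} \mid \mathsf{no}_P \mid \mathsf{no}_E$. Monitor transitions: $\triangleleft\mathtt{l}(v).M\xrightarrow{\triangleleft\mathtt{l}(v)}M$; $\blacktriangle\mathtt{l}(v).M\xrightarrow{\blacktriangle\mathtt{l}(v)}M$; $\mu_X.M\xrightarrow{\tau}M[\mu_X.M/X]$; $\triangleright\{\mathtt{l}_i(x_i).M_i\}_{i\in I}\xrightarrow{\triangleright\mathtt{l}_j(v)}M_j[v/x_j]$ and $\blacktriangledown\{\mathtt{l}_i(x_i).M_i\}_{i\in I}\xrightarrow{\blacktriangledown\mathtt{l}_j(v)}M_j[v/x_j]$ for $j\in I$; conditionals as for processes; $\triangleright\{\mathtt{l}_i(x_i).M_i\}_{i\in I}\xrightarrow{\triangleright\mathtt{l}(v)}\mathsf{no}_P$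 and $\blacktriangledown\{\mathtt{l}_i(x_i).M_i\}_{i\in I}\xrightarrow{\blacktriangledown\mathtt{l}(v)}\mathsf{no}_E$ whenever $\mathtt{l}\neq\mathtt{l}_i$ for all $i\in I$. ($\mathsf{no}_P,\mathsf{no}_E,\mathbf{0}$ have no transitions.) Composite system $\langle P;M\rangle$: synchronisation $P\xrightarrow{\triangleleft\mathtt{l}(v)}P'$, $M\xrightarrow{\triangleright\mathtt{l}(v)}M'$ gives $\langle P;M\rangle\xrightarrow{\tau}\langle P';M'\rangle$; $P\xrightarrow{\triangleright\mathtt{l}(v)}P'$, $M\xrightarrow{\triangleleft\mathtt{l}(v)}M'$ gives $\langle P;M\rangle\xrightarrow{\tau}\langle P';M'\rangle$; $M\xrightarrow{\alpha}M'$ with $\alpha\in\{\blacktriangle\mathtt{l}(v),\blacktriangledown\mathtt{l}(v)\}$ gives $\langle P;M\rangle\xrightarrow{\alpha}\langle P;M'\rangle$; $\tau$-moves of $P$ or of $M$ alone lift to $\langle P;M\rangle$. A trace $t$ is a finite sequence of actions $\blacktriangle\mathtt{l}(v)$, $\blacktriangledown\mathtt{l}(v)$; $\xRightarrow{t}$ is a sequence of transitions with visible labels $t$ interleaved with finitely many $\tau$'s. Synthesis: $[\![\oplus\{!\mathtt{l}_i(\mathsf{B}_i).S_i\}_{i\in I}]\!] = \triangleright\{\mathtt{l}_i(x_i).\,\mathsf{if}\ \mathsf{isValue}_{\mathsf{B}_i}(x_i)\ \mathsf{then}\ \blacktriangle\mathtt{l}_i(x_i).[\![S_i]\!]\ \mathsf{else}\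 \mathsf{no}_P\}_{i\in I}$; $[\![\&\{?\mathtt{l}_i(\mathsf{B}_i).S_i\}_{i\in I}]\!] = \blacktriangledown\{\mathtt{l}_i(x_i).\,\mathsf{if}\ \mathsf{isValue}_{\mathsf{B}_i}(x_i)\ \mathsf{then}\ \triangleleft\mathtt{l}_i(x_i).[\![S_i]\!]\ \mathsf{else}\ \mathsf{no}_E\}_{i\in I}$; $[\![\mathsf{rec}\ X.S]\!]=\mu_X.[\![S]\!]$; $[\![X]\!]=X$; $[\![\mathsf{end}]\!]=\mathbf{0}$. *)

From Stdlib Require Import List ZArith String Bool Arith.
Import ListNotations.

Definition label := nat.
Definition var := nat.
Definition pvar := nat.

Inductive btype := TInt | TStr | TBool | TPair (B1 B2 : btype).

Inductive value := VInt (n : Z) | VStr (s : string) | VBool (b : bool)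
                 | VPair (v1 v2 : value).

Fixpoint has_btype (v : value) (B : btype) : Prop :=
  match v, B with
  | VInt _, TInt | VStr _, TStr | VBool _, TBool => True
  | VPair v1 v2, TPair B1 B2 => has_btype v1 B1 /\ has_btype v2 B2
  | _, _ => False
  end.

Fixpoint has_btypeb (v : value) (B : btype) : bool :=
  match v, B with
  | VInt _, TInt | VStr _, TStr | VBool _, TBool => true
  | VPair v1 v2, TPair B1 B2 => has_btypeb v1 B1 && has_btypeb v2 B2
  | _, _ => false
  end.

Fixpoint value_eqb (v w : value) : bool :=
  match v, w with
  | VInt n, VInt m => Z.eqb n m
  | VStr s, VStr t => String.eqb s t
  | VBool b, VBool c => Bool.eqb b c
  | VPair v1 v2, VPair w1 w2 => value_eqb v1 w1 && value_eqb v2 w2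
  | _, _ => false
  end.

Inductive atom := AVal (v : value) | AVar (x : var).

Inductive pred :=
| PTT | PFF
| PEq (a1 a2 : atom)
| PLe (a1 a2 : atom)
| PLt (a1 a2 : atom)
| PAnd (A1 A2 : pred)
| PNot (A : pred)
| PIsValue (B : btype) (a : atom).

(* evaluation A ⇓ b (only defined on closed, meaningful predicates) *)
Fixpoint eval_pred (A : pred) : option bool :=
  match A with
  | PTT => Some true
  | PFF => Some false
  | PEq (AVal v) (AVal w) => Some (value_eqb v w)
  | PLe (AVal (VInt n)) (AVal (VInt m)) => Some (Z.leb n m)
  | PLt (AVal (VInt n)) (AVal (VInt m)) => Some (Z.ltb n m)
  | PAnd A1 A2 =>
      match eval_pred A1, eval_pred A2 with
      | Some b1, Some b2 => Some (b1 && b2) | _, _ => None end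
  | PNot A1 => option_map negb (eval_pred A1)
  | PIsValue B (AVal v) => Some (has_btypeb v B)
  | _ => None
  end.

Definition asubst (x : var) (v : value) (a : atom) : atom :=
  match a with
  | AVar y => if Nat.eqb x y then AVal v else a
  | AVal _ => a
  end.

Fixpoint predsubst (x : var) (v : value) (A : pred) : pred :=
  match A with
  | PTT => PTT | PFF => PFF
  | PEq a1 a2 => PEq (asubst x v a1) (asubst x v a2)
  | PLe a1 a2 => PLe (asubst x v a1) (asubst x v a2)
  | PLt a1 a2 => PLt (asubst x v a1) (asubst x v a2)
  | PAnd A1 A2 => PAnd (predsubst x v A1) (predsubst x v A2)
  | PNot A1 => PNot (predsubst x v A1)
  | PIsValue B a => PIsValue B (asubst x v a)
  end.

Inductive proc :=
| PSel (l : label) (a : atom) (P : proc)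
| PBra (bs : list (label * var * proc))
| PRec (X : pvar) (P : proc)
| PVar (X : pvar)
| PIf (A : pred) (P Q : proc)
| PNil.

Fixpoint psubst_v (x : var) (v : value) (P : proc) : proc :=
  match P with
  | PSel l a Q => PSel l (asubst x v a) (psubst_v x v Q)
  | PBra bs => PBra (map (fun '(l, y, Q) =>
                  (l, y, if Nat.eqb x y then Q else psubst_v x v Q)) bs)
  | PRec X Q => PRec X (psubst_v x v Q)
  | PVar X => PVar X
  | PIf A Q1 Q2 => PIf (predsubst x v A) (psubst_v x v Q1) (psubst_v x v Q2)
  | PNil => PNil
  end.

Fixpoint psubst_p (X : pvar) (R : proc) (P : proc) : proc :=
  match P with
  | PSel l a Q => PSel l a (psubst_p X R Q)
  | PBra bs => PBra (map (fun '(l, y, Q) => (l, y, psubst_p X R Q)) bs)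
  | PRec Y Q => if Nat.eqb X Y then P else PRec Y (psubst_p X R Q)
  | PVar Y => if Nat.eqb X Y then R else P
  | PIf A Q1 Q2 => PIf A (psubst_p X R Q1) (psubst_p X R Q2)
  | PNil => PNil
  end.

Inductive plab := PLTau | PLOut (l : label) (v : value) | PLIn (l : label) (v : value).

Inductive pstep : proc -> plab -> proc -> Prop :=
| ps_rec X P : pstep (PRec X P) PLTau (psubst_p X (PRec X P) P)
| ps_out l v P : pstep (PSel l (AVal v) P) (PLOut l v) P
| ps_in bs l x P v : In (l, x, P) bs -> pstep (PBra bs) (PLIn l v) (psubst_v x v P)
| ps_if_t A P Q : eval_pred A = Some true -> pstep (PIf A P Q) PLTau P
| ps_if_f A P Q : eval_pred A = Some false -> pstep (PIf A P Q) PLTau Q.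

Fixpoint punguarded (X : pvar) (P : proc) : Prop :=
  match P with
  | PVar Y => X = Y
  | PRec Y Q => X <> Y /\ punguarded X Q
  | PIf _ Q1 Q2 => punguarded X Q1 \/ punguarded X Q2
  | _ => False
  end.

Fixpoint wf_proc (P : proc) : Prop :=
  match P with
  | PSel _ _ Q => wf_proc Q
  | PBra bs => NoDup (map (fun '(l, _, _) => l) bs) /\
      (fix go (bs : list (label * var * proc)) : Prop :=
         match bs with [] => True | (_, _, Q) :: r => wf_proc Q /\ go r end) bs
  | PRec X Q => ~ punguarded X Q /\ wf_proc Q
  | PVar _ => True
  | PIf _ Q1 Q2 => wf_proc Q1 /\ wf_proc Q2
  | PNil => True
  end.

Inductive stype :=
| TSel (bs : list (label * btype * stype))
| TBra (bs : list (label * btype * stype))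
| TRec (X : pvar) (S : stype)
| TVar (X : pvar)
| TEnd.

Fixpoint tsubst (X : pvar) (R : stype) (S : stype) : stype :=
  match S with
  | TSel bs => TSel (map (fun '(l, B, S') => (l, B, tsubst X R S')) bs)
  | TBra bs => TBra (map (fun '(l, B, S') => (l, B, tsubst X R S')) bs)
  | TRec Y S' => if Nat.eqb X Y then S else TRec Y (tsubst X R S')
  | TVar Y => if Nat.eqb X Y then R else S
  | TEnd => TEnd
  end.

Fixpoint tunguarded (X : pvar) (S : stype) : Prop :=
  match S with
  | TVar Y => X = Y
  | TRec Y S' => X <> Y /\ tunguarded X S'
  | _ => False
  end.

Fixpoint tfree (X : pvar) (S : stype) : Prop :=
  match S with
  | TSel bs | TBra bs =>
      (fix go (bs : list (label * btype * stype)) : Prop :=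
         match bs with [] => False | (_, _, S') :: r => tfree X S' \/ go r end) bs
  | TRec Y S' => X <> Y /\ tfree X S'
  | TVar Y => X = Y
  | TEnd => False
  end.

Fixpoint wf_stype (S : stype) : Prop :=
  match S with
  | TSel bs | TBra bs =>
      bs <> [] /\ NoDup (map (fun '(l, _, _) => l) bs) /\
      (fix go (bs : list (label * btype * stype)) : Prop :=
         match bs with [] => True | (_, _, S') :: r => wf_stype S' /\ go r end) bs
  | TRec X S' => ~ tunguarded X S' /\ wf_stype S'
  | TVar _ => True
  | TEnd => True
  end.

Definition closed_stype (S : stype) : Prop := forall X, ~ tfree X S.

Inductive unf : stype -> stype -> Prop :=
| unf_rec X S S' : unf (tsubst X (TRec X S) S) S' -> unf (TRec X S) S'
| unf_sel bs : unf (TSel bs) (TSel bs)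
| unf_bra bs : unf (TBra bs) (TBra bs)
| unf_var X : unf (TVar X) (TVar X)
| unf_end : unf TEnd TEnd.

(* equi-recursive type equality: equality of the (infinite) unfoldings,
   branches compared as sets indexed by labels *)
CoInductive teq : stype -> stype -> Prop :=
| teq_sel S T bs1 bs2 :
    unf S (TSel bs1) -> unf T (TSel bs2) ->
    (forall l B S1, In (l, B, S1) bs1 -> exists S2, In (l, B, S2) bs2 /\ teq S1 S2) ->
    (forall l B S2, In (l, B, S2) bs2 -> exists S1, In (l, B, S1) bs1 /\ teq S1 S2) ->
    teq S T
| teq_bra S T bs1 bs2 :
    unf S (TBra bs1) -> unf T (TBra bs2) ->
    (forall l B S1, In (l, B, S1) bs1 -> exists S2, In (l, B, S2) bs2 /\ teq S1 S2) ->
    (forall l B S2, In (l, B, S2) bs2 -> exists S1, In (l, B, S1) bs1 /\ teq S1 S2) ->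
    teq S T
| teq_var S T X : unf S (TVar X) -> unf T (TVar X) -> teq S T
| teq_end S T : unf S TEnd -> unf T TEnd -> teq S T.

Definition venv := list (var * btype).
Definition penv := list (pvar * stype).

Fixpoint lookup {A : Type} (E : list (nat * A)) (x : nat) : option A :=
  match E with
  | [] => None
  | (y, a) :: r => if Nat.eqb x y then Some a else lookup r x
  end.

Inductive atyped (G : venv) : atom -> btype -> Prop :=
| at_var x B : lookup G x = Some B -> atyped G (AVar x) B
| at_val v B : has_btype v B -> atyped G (AVal v) B.

Inductive ptyped (G : venv) : pred -> Prop :=
| pt_tt : ptyped G PTT
| pt_ff : ptyped G PFF
| pt_eq a1 a2 B : atyped G a1 B -> atyped G a2 B -> ptyped G (PEq a1 a2)
| pt_le a1 a2 : atyped G a1 TInt -> atyped G a2 TInt -> ptyped G (PLe a1 a2)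
| pt_lt a1 a2 : atyped G a1 TInt -> atyped G a2 TInt -> ptyped G (PLt a1 a2)
| pt_and A1 A2 : ptyped G A1 -> ptyped G A2 -> ptyped G (PAnd A1 A2)
| pt_not A : ptyped G A -> ptyped G (PNot A)
| pt_isv B a B' : atyped G a B' -> ptyped G (PIsValue B a).

Inductive typed : penv -> venv -> proc -> stype -> Prop :=
| tBra Th G pbs tbs :
    (forall l B S, In (l, B, S) tbs ->
       exists x P, In (l, x, P) pbs /\ typed Th ((x, B) :: G) P S) ->
    typed Th G (PBra pbs) (TBra tbs)
| tSel Th G l a P tbs B S :
    In (l, B, S) tbs -> atyped G a B -> typed Th G P S ->
    typed Th G (PSel l a P) (TSel tbs)
| tRec Th G X P S : typed ((X, S) :: Th) G P S -> typed Th G (PRec X P) S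
| tPVar Th G X S : lookup Th X = Some S -> typed Th G (PVar X) S
| tIf Th G A P Q S : ptyped G A -> typed Th G P S -> typed Th G Q S ->
    typed Th G (PIf A P Q) S
| tNil Th G : typed Th G PNil TEnd
| tEqui Th G P S S' : typed Th G P S -> teq S S' -> typed Th G P S'.

Inductive mon :=
| MSel (l : label) (a : atom) (M : mon)
| MBra (bs : list (label * var * mon))
| MUp (l : label) (a : atom) (M : mon)
| MDown (bs : list (label * var * mon))
| MRec (X : pvar) (M : mon)
| MVar (X : pvar)
| MIf (A : pred) (M N : mon)
| MNil
| MNoP
| MNoE.

Fixpoint msubst_v (x : var) (v : value) (M : mon) : mon :=
  match M with
  | MSel l a N => MSel l (asubst x v a) (msubst_v x v N)
  | MBra bs => MBra (map (fun '(l, y, N) =>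
                  (l, y, if Nat.eqb x y then N else msubst_v x v N)) bs)
  | MUp l a N => MUp l (asubst x v a) (msubst_v x v N)
  | MDown bs => MDown (map (fun '(l, y, N) =>
                  (l, y, if Nat.eqb x y then N else msubst_v x v N)) bs)
  | MRec X N => MRec X (msubst_v x v N)
  | MVar X => MVar X
  | MIf A N1 N2 => MIf (predsubst x v A) (msubst_v x v N1) (msubst_v x v N2)
  | MNil => MNil | MNoP => MNoP | MNoE => MNoE
  end.

Fixpoint msubst_p (X : pvar) (R : mon) (M : mon) : mon :=
  match M with
  | MSel l a N => MSel l a (msubst_p X R N)
  | MBra bs => MBra (map (fun '(l, y, N) => (l, y, msubst_p X R N)) bs)
  | MUp l a N => MUp l a (msubst_p X R N)
  | MDown bs => MDown (map (fun '(l, y, N) => (l, y, msubst_p X R N)) bs)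
  | MRec Y N => if Nat.eqb X Y then M else MRec Y (msubst_p X R N)
  | MVar Y => if Nat.eqb X Y then R else M
  | MIf A N1 N2 => MIf A (msubst_p X R N1) (msubst_p X R N2)
  | MNil => MNil | MNoP => MNoP | MNoE => MNoE
  end.

Inductive mlab :=
| MLTau
| MLOut (l : label) (v : value)
| MLIn (l : label) (v : value)
| MLUp (l : label) (v : value)
| MLDown (l : label) (v : value).

Inductive mstep : mon -> mlab -> mon -> Prop :=
| ms_out l v M : mstep (MSel l (AVal v) M) (MLOut l v) M
| ms_up l v M : mstep (MUp l (AVal v) M) (MLUp l v) M
| ms_rec X M : mstep (MRec X M) MLTau (msubst_p X (MRec X M) M)
| ms_in bs l x M v : In (l, x, M) bs -> mstep (MBra bs) (MLIn l v) (msubst_v x v M)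
| ms_down bs l x M v : In (l, x, M) bs -> mstep (MDown bs) (MLDown l v) (msubst_v x v M)
| ms_if_t A M N : eval_pred A = Some true -> mstep (MIf A M N) MLTau M
| ms_if_f A M N : eval_pred A = Some false -> mstep (MIf A M N) MLTau N
| ms_in_err bs l v : (forall l' x M, In (l', x, M) bs -> l' <> l) ->
    mstep (MBra bs) (MLIn l v) MNoP
| ms_down_err bs l v : (forall l' x M, In (l', x, M) bs -> l' <> l) ->
    mstep (MDown bs) (MLDown l v) MNoE.

Inductive vis := VUp (l : label) (v : value) | VDown (l : label) (v : value).
Inductive clab := CTau | CVis (a : vis).

Inductive cstep : proc * mon -> clab -> proc * mon -> Prop :=
| cs_sync_out P P' M M' l v :
    pstep P (PLOut l v) P' -> mstep M (MLIn l v) M' -> cstep (P, M) CTau (P', M')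
| cs_sync_in P P' M M' l v :
    pstep P (PLIn l v) P' -> mstep M (MLOut l v) M' -> cstep (P, M) CTau (P', M')
| cs_up P M M' l v : mstep M (MLUp l v) M' -> cstep (P, M) (CVis (VUp l v)) (P, M')
| cs_down P M M' l v : mstep M (MLDown l v) M' -> cstep (P, M) (CVis (VDown l v)) (P, M')
| cs_ptau P P' M : pstep P PLTau P' -> cstep (P, M) CTau (P', M)
| cs_mtau P M M' : mstep M MLTau M' -> cstep (P, M) CTau (P, M').

Inductive wtrace : proc * mon -> list vis -> proc * mon -> Prop :=
| wt_refl C : wtrace C [] C
| wt_tau C C1 t C' : cstep C CTau C1 -> wtrace C1 t C' -> wtrace C t C'
| wt_vis C C1 a t C' : cstep C (CVis a) C1 -> wtrace C1 t C' -> wtrace C (a :: t) C'.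

Definition xbind : var := 0%nat.

Fixpoint synth (S : stype) : mon :=
  match S with
  | TSel bs => MBra (map (fun '(l, B, S') =>
      (l, xbind, MIf (PIsValue B (AVar xbind)) (MUp l (AVar xbind) (synth S')) MNoP)) bs)
  | TBra bs => MDown (map (fun '(l, B, S') =>
      (l, xbind, MIf (PIsValue B (AVar xbind)) (MSel l (AVar xbind) (synth S')) MNoE)) bs)
  | TRec X S' => MRec X (synth S')
  | TVar X => MVar X
  | TEnd => MNil
  end.

(* The configurations reachable from <P; [[S]]> satisfy an invariant: P has
   some type T, and the monitor is either no_E or a state of the synthesised
   monitor [[Tm]] of a type Tm that agrees with T up to unfolding and
   equi-recursive equality.  Subject reduction preserves the invariant along
   synchronisations, and since P is well typed the monitor never rejects one
   of its outputs, so no_P is unreachable.  Conversely, progress of well-typed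
   processes shows that in every state of the invariant other than no_E the
   composite system can still move unless P = 0: whatever P is ready to do,
   its type predicts it and the monitor offers the matching action. *)

From Stdlib Require Import List Arith Bool.
Import ListNotations.

Definition stype_nested_ind (Q : stype -> Prop)
  (Hsel : forall bs, Forall (fun b => Q (snd b)) bs -> Q (TSel bs))
  (Hbra : forall bs, Forall (fun b => Q (snd b)) bs -> Q (TBra bs))
  (Hrec : forall X S, Q S -> Q (TRec X S))
  (Hvar : forall X, Q (TVar X)) (Hend : Q TEnd) : forall S, Q S :=
  fix F S := match S return Q S with
  | TSel bs => Hsel bs ((fix G (bs : list (label * btype * stype))
                           : Forall (fun b => Q (snd b)) bs :=
      match bs with [] => Forall_nil _ | (lB, S') :: r => Forall_cons (lB, S') (F S') (G r) end) bs)
  | TBra bs => Hbra bs ((fix G (bs : list (label * btype * stype))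
                           : Forall (fun b => Q (snd b)) bs :=
      match bs with [] => Forall_nil _ | (lB, S') :: r => Forall_cons (lB, S') (F S') (G r) end) bs)
  | TRec X S' => Hrec X S' (F S')
  | TVar X => Hvar X
  | TEnd => Hend
  end.

Definition proc_nested_ind (Q : proc -> Prop)
  (Hsel : forall l a P, Q P -> Q (PSel l a P))
  (Hbra : forall bs, Forall (fun b => Q (snd b)) bs -> Q (PBra bs))
  (Hrec : forall X P, Q P -> Q (PRec X P))
  (Hvar : forall X, Q (PVar X))
  (Hif : forall A P1 P2, Q P1 -> Q P2 -> Q (PIf A P1 P2))
  (Hnil : Q PNil) : forall P, Q P :=
  fix F P := match P return Q P with
  | PSel l a P' => Hsel l a P' (F P')
  | PBra bs => Hbra bs ((fix G (bs : list (label * var * proc))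
                           : Forall (fun b => Q (snd b)) bs :=
      match bs with [] => Forall_nil _ | (lx, P') :: r => Forall_cons (lx, P') (F P') (G r) end) bs)
  | PRec X P' => Hrec X P' (F P')
  | PVar X => Hvar X
  | PIf A P1 P2 => Hif A P1 P2 (F P1) (F P2)
  | PNil => Hnil
  end.

Section TypedNestedInd.

Variable Q : penv -> venv -> proc -> stype -> Prop.

Hypothesis Hbra : forall Th G pbs tbs,
  (forall l B S, In (l, B, S) tbs -> exists x P,
     In (l, x, P) pbs /\ typed Th ((x, B) :: G) P S /\ Q Th ((x, B) :: G) P S) ->
  Q Th G (PBra pbs) (TBra tbs).
Hypothesis Hsel : forall Th G l a P tbs B S, In (l, B, S) tbs -> atyped G a B ->
  typed Th G P S -> Q Th G P S -> Q Th G (PSel l a P) (TSel tbs).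
Hypothesis Hrec : forall Th G X P S,
  typed ((X, S) :: Th) G P S -> Q ((X, S) :: Th) G P S -> Q Th G (PRec X P) S.
Hypothesis Hvar : forall Th G X S, lookup Th X = Some S -> Q Th G (PVar X) S.
Hypothesis Hif : forall Th G A P1 P2 S, ptyped G A ->
  typed Th G P1 S -> Q Th G P1 S -> typed Th G P2 S -> Q Th G P2 S ->
  Q Th G (PIf A P1 P2) S.
Hypothesis Hnil : forall Th G, Q Th G PNil TEnd.
Hypothesis Hequi : forall Th G P S S',
  typed Th G P S -> Q Th G P S -> teq S S' -> Q Th G P S'.

Fixpoint typed_nested_ind Th G P T (H : typed Th G P T) {struct H} : Q Th G P T :=
  match H with
  | tBra Th G pbs tbs Hb => Hbra Th G pbs tbs (fun l B U Hin =>
      match Hb l B U Hin with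
      | ex_intro _ x (ex_intro _ P (conj HinP HP)) =>
          ex_intro _ x (ex_intro _ P (conj HinP (conj HP (typed_nested_ind _ _ _ _ HP))))
      end)
  | tSel Th G l a P tbs B U Hin Ha HP => Hsel Th G l a P tbs B U Hin Ha HP (typed_nested_ind _ _ _ _ HP)
  | tRec Th G X P U HP => Hrec Th G X P U HP (typed_nested_ind _ _ _ _ HP)
  | tPVar Th G X U Hl => Hvar Th G X U Hl
  | tIf Th G A P1 P2 U HA H1 H2 =>
      Hif Th G A P1 P2 U HA H1 (typed_nested_ind _ _ _ _ H1) H2 (typed_nested_ind _ _ _ _ H2)
  | tNil Th G => Hnil Th G
  | tEqui Th G P U U' HP He => Hequi Th G P U U' HP (typed_nested_ind _ _ _ _ HP) He
  end.

End TypedNestedInd.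

Definition blabel {A B : Type} (b : label * A * B) : label := let '(l, _, _) := b in l.

Lemma NoDup_map_In_inj {A B : Type} (f : A -> B) (xs : list A) (a1 a2 : A) :
  NoDup (map f xs) -> In a1 xs -> In a2 xs -> f a1 = f a2 -> a1 = a2.
Proof.
  induction xs as [|a xs IH]; simpl; intros Hnd H1 H2 E; [contradiction|].
  inversion Hnd as [|? ? Hnotin Hnd']; subst.
  destruct H1 as [<-|H1], H2 as [<-|H2]; auto; exfalso; apply Hnotin.
  - rewrite E; apply in_map; assumption.
  - rewrite <- E; apply in_map; assumption.
Qed.

Lemma blabel_In_inj {A B : Type} (bs : list (label * A * B)) l a1 a2 b1 b2 :
  NoDup (map blabel bs) -> In (l, a1, b1) bs -> In (l, a2, b2) bs -> a1 = a2 /\ b1 = b2.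
Proof.
  intros Hnd H1 H2.
  assert (E : (l, a1, b1) = (l, a2, b2)) by (eapply NoDup_map_In_inj; eauto).
  injection E; auto.
Qed.

Lemma map_blabel_branches {A B C : Type} (g : label -> A -> B -> C) (bs : list (label * A * B)) :
  map blabel (map (fun '(l, a, b) => (l, a, g l a b)) bs) = map blabel bs.
Proof. rewrite map_map; apply map_ext; intros [[l a] b]; reflexivity. Qed.

Inductive nodup_stype : stype -> Prop :=
| nd_sel bs : NoDup (map blabel bs) ->
    (forall l B S, In (l, B, S) bs -> nodup_stype S) -> nodup_stype (TSel bs)
| nd_bra bs : NoDup (map blabel bs) ->
    (forall l B S, In (l, B, S) bs -> nodup_stype S) -> nodup_stype (TBra bs)
| nd_rec X S : nodup_stype S -> nodup_stype (TRec X S)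
| nd_var X : nodup_stype (TVar X)
| nd_end : nodup_stype TEnd.

Inductive nodup_proc : proc -> Prop :=
| ndp_sel l a P : nodup_proc P -> nodup_proc (PSel l a P)
| ndp_bra bs : NoDup (map blabel bs) ->
    (forall l x P, In (l, x, P) bs -> nodup_proc P) -> nodup_proc (PBra bs)
| ndp_rec X P : nodup_proc P -> nodup_proc (PRec X P)
| ndp_var X : nodup_proc (PVar X)
| ndp_if A P Q : nodup_proc P -> nodup_proc Q -> nodup_proc (PIf A P Q)
| ndp_nil : nodup_proc PNil.

Lemma wf_stype_branch bs :
  (fix go (bs : list (label * btype * stype)) : Prop :=
     match bs with [] => True | (_, _, S') :: r => wf_stype S' /\ go r end) bs ->
  forall l B S, In (l, B, S) bs -> wf_stype S.
Proof.
  induction bs as [|[[l0 B0] S0] r IH]; simpl; intros Hgo l B S Hin; [contradiction|].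
  destruct Hgo as [HS0 Hr], Hin as [E|Hin]; [injection E as <- <- <-|]; eauto.
Qed.

Lemma wf_proc_branch bs :
  (fix go (bs : list (label * var * proc)) : Prop :=
     match bs with [] => True | (_, _, Q) :: r => wf_proc Q /\ go r end) bs ->
  forall l x P, In (l, x, P) bs -> wf_proc P.
Proof.
  induction bs as [|[[l0 x0] P0] r IH]; simpl; intros Hgo l x P Hin; [contradiction|].
  destruct Hgo as [HP0 Hr], Hin as [E|Hin]; [injection E as <- <- <-|]; eauto.
Qed.

Lemma wf_stype_nodup S : wf_stype S -> nodup_stype S.
Proof.
  induction S as [bs IH|bs IH|X S IH|X|] using stype_nested_ind; simpl; intros Hwf;
    try rewrite Forall_forall in IH.
  - destruct Hwf as [_ [Hnd Hgo]]; constructor; [exact Hnd|].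
    intros l B S Hin; apply (IH _ Hin), (wf_stype_branch _ Hgo l B S Hin).
  - destruct Hwf as [_ [Hnd Hgo]]; constructor; [exact Hnd|].
    intros l B S Hin; apply (IH _ Hin), (wf_stype_branch _ Hgo l B S Hin).
  - constructor; apply IH, Hwf.
  - constructor.
  - constructor.
Qed.

Lemma wf_proc_nodup P : wf_proc P -> nodup_proc P.
Proof.
  induction P as [l a P IH|bs IH|X P IH|X|A P1 IH1 P2 IH2|] using proc_nested_ind;
    simpl; intros Hwf; try rewrite Forall_forall in IH.
  - constructor; auto.
  - destruct Hwf as [Hnd Hgo]; constructor; [exact Hnd|].
    intros l x P Hin; apply (IH _ Hin), (wf_proc_branch _ Hgo l x P Hin).
  - constructor; apply IH, Hwf.
  - constructor.
  - constructor; tauto.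
  - constructor.
Qed.

Lemma nodup_stype_tsubst X R S :
  nodup_stype R -> nodup_stype S -> nodup_stype (tsubst X R S).
Proof.
  intros HR HS; induction HS as [bs Hnd _ IH|bs Hnd _ IH|Y S HS IH|Y|]; simpl.
  - constructor; [rewrite map_blabel_branches; exact Hnd|].
    intros l B S Hin; apply in_map_iff in Hin as [[[l0 B0] S0] [E Hin]].
    injection E as <- <- <-; eauto.
  - constructor; [rewrite map_blabel_branches; exact Hnd|].
    intros l B S Hin; apply in_map_iff in Hin as [[[l0 B0] S0] [E Hin]].
    injection E as <- <- <-; eauto.
  - destruct (Nat.eqb X Y); constructor; assumption.
  - destruct (Nat.eqb X Y); [assumption|constructor].
  - constructor.
Qed.

Lemma nodup_proc_vsubst x v P : nodup_proc P -> nodup_proc (psubst_v x v P).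
Proof.
  induction 1 as [l a P _ IH|bs Hnd Hbs IH|X P _ IH|X|A P Q _ IHP _ IHQ|]; simpl;
    constructor; auto.
  - rewrite map_blabel_branches; exact Hnd.
  - intros l y Q Hin; apply in_map_iff in Hin as [[[l0 y0] Q0] [E Hin]].
    injection E as <- <- <-; destruct (Nat.eqb x y0); eauto.
Qed.

Lemma nodup_proc_psubst X R P : nodup_proc R -> nodup_proc P -> nodup_proc (psubst_p X R P).
Proof.
  intros HR HP; induction HP as [l a P _ IH|bs Hnd _ IH|Y P HP IH|Y|A P Q _ IHP _ IHQ|]; simpl.
  - constructor; assumption.
  - constructor; [rewrite map_blabel_branches; exact Hnd|].
    intros l y Q Hin; apply in_map_iff in Hin as [[[l0 y0] Q0] [E Hin]].
    injection E as <- <- <-; eauto.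
  - destruct (Nat.eqb X Y); constructor; assumption.
  - destruct (Nat.eqb X Y); [assumption|constructor].
  - constructor; assumption.
  - constructor.
Qed.

Lemma nodup_proc_step P a P' : pstep P a P' -> nodup_proc P -> nodup_proc P'.
Proof.
  intros Hs Hnd; destruct Hs; inversion Hnd; subst; auto.
  - apply nodup_proc_psubst; assumption.
  - apply nodup_proc_vsubst; eauto.
Qed.

(** * Equi-recursive types *)

Lemma unf_functional S U1 U2 : unf S U1 -> unf S U2 -> U1 = U2.
Proof.
  intros H1; revert U2; induction H1; intros U2 H2; inversion H2; subst; auto.
Qed.

Definition branches_rel (R : stype -> stype -> Prop) (bs1 bs2 : list (label * btype * stype)) :=
  (forall l B S1, In (l, B, S1) bs1 -> exists S2, In (l, B, S2) bs2 /\ R S1 S2) /\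
  (forall l B S2, In (l, B, S2) bs2 -> exists S1, In (l, B, S1) bs1 /\ R S1 S2).

Lemma branches_rel_refl (R : stype -> stype -> Prop) bs :
  (forall S, R S S) -> branches_rel R bs bs.
Proof. intros Hrefl; split; intros l B S Hin; exists S; auto. Qed.

Lemma branches_rel_impl (R R' : stype -> stype -> Prop) bs1 bs2 :
  (forall S1 S2, R S1 S2 -> R' S1 S2) -> branches_rel R bs1 bs2 -> branches_rel R' bs1 bs2.
Proof.
  intros Himpl [H12 H21]; split.
  - intros l B S1 Hin; destruct (H12 l B S1 Hin) as [S2 [Hin2 HR]]; eauto.
  - intros l B S2 Hin; destruct (H21 l B S2 Hin) as [S1 [Hin1 HR]]; eauto.
Qed.

Lemma teq_sel_inv S T :
  teq S T -> (exists bs, unf S (TSel bs)) \/ (exists bs, unf T (TSel bs)) ->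
  exists bs1 bs2, unf S (TSel bs1) /\ unf T (TSel bs2) /\ branches_rel teq bs1 bs2.
Proof.
  intros Heq Hsel;
    destruct Heq as [S T bs1 bs2 HS HT H12 H21|S T bs1 bs2 HS HT _ _|S T X HS HT|S T HS HT];
    [exists bs1, bs2; repeat split; assumption|..];
    exfalso; destruct Hsel as [[bs Hu]|[bs Hu]];
    first [pose proof (unf_functional _ _ _ Hu HS) | pose proof (unf_functional _ _ _ Hu HT)];
    discriminate.
Qed.

Lemma teq_bra_inv S T :
  teq S T -> (exists bs, unf S (TBra bs)) \/ (exists bs, unf T (TBra bs)) ->
  exists bs1 bs2, unf S (TBra bs1) /\ unf T (TBra bs2) /\ branches_rel teq bs1 bs2.
Proof.
  intros Heq Hbra;
    destruct Heq as [S T bs1 bs2 HS HT _ _|S T bs1 bs2 HS HT H12 H21|S T X HS HT|S T HS HT];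
    [|exists bs1, bs2; repeat split; assumption|..];
    exfalso; destruct Hbra as [[bs Hu]|[bs Hu]];
    first [pose proof (unf_functional _ _ _ Hu HS) | pose proof (unf_functional _ _ _ Hu HT)];
    discriminate.
Qed.

Lemma teq_unfold T X S : teq T (TRec X S) -> teq T (tsubst X (TRec X S) S).
Proof.
  intros Heq; inversion Heq as [? ? bs1 bs2 HT HS|? ? bs1 bs2 HT HS|? ? Y HT HS|? ? HT HS];
    subst; inversion HS; subst.
  - eapply teq_sel; eauto.
  - eapply teq_bra; eauto.
  - eapply teq_var; eauto.
  - eapply teq_end; eauto.
Qed.

(* [teq] cannot serve alone: its reflexivity would need unfolding to
   terminate, so the first disjunct relates a type to its own unfoldings. *)
Definition conforms (T Tm : stype) : Prop :=
  (forall U, unf Tm U -> unf T U) \/ teq T Tm.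

Lemma conforms_refl T : conforms T T.
Proof. left; auto. Qed.

Lemma conforms_unfold T X S : conforms T (TRec X S) -> conforms T (tsubst X (TRec X S) S).
Proof.
  intros [Hunf|Heq].
  - left; intros U Hu; apply Hunf; constructor; exact Hu.
  - right; apply teq_unfold; exact Heq.
Qed.

Lemma conforms_sel T bsm :
  conforms T (TSel bsm) -> exists bs, unf T (TSel bs) /\ branches_rel conforms bs bsm.
Proof.
  intros [Hunf|Heq].
  - exists bsm; split; [apply Hunf; constructor|apply branches_rel_refl, conforms_refl].
  - destruct (teq_sel_inv _ _ Heq (or_intror (ex_intro _ bsm (unf_sel bsm))))
      as [bs [bs' [HT [HTm Hrel]]]].
    inversion HTm; subst.
    exists bs; split; [exact HT|].
    apply (branches_rel_impl teq); [intros; right; assumption|exact Hrel].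
Qed.

Lemma conforms_bra T bsm :
  conforms T (TBra bsm) -> exists bs, unf T (TBra bs) /\ branches_rel conforms bs bsm.
Proof.
  intros [Hunf|Heq].
  - exists bsm; split; [apply Hunf; constructor|apply branches_rel_refl, conforms_refl].
  - destruct (teq_bra_inv _ _ Heq (or_intror (ex_intro _ bsm (unf_bra bsm))))
      as [bs [bs' [HT [HTm Hrel]]]].
    inversion HTm; subst.
    exists bs; split; [exact HT|].
    apply (branches_rel_impl teq); [intros; right; assumption|exact Hrel].
Qed.

Lemma conforms_var T X : conforms T (TVar X) -> unf T (TVar X).
Proof.
  intros [Hunf|Heq]; [apply Hunf; constructor|].
  inversion Heq as [? ? ? ? _ Hu|? ? ? ? _ Hu|? ? Y HT Hu|? ? _ Hu]; inversion Hu; subst; exact HT.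
Qed.

Lemma conforms_end T : conforms T TEnd -> unf T TEnd.
Proof.
  intros [Hunf|Heq]; [apply Hunf; constructor|].
  inversion Heq as [? ? ? ? _ Hu|? ? ? ? _ Hu|? ? Y _ Hu|? ? HT Hu]; inversion Hu; subst; exact HT.
Qed.

Lemma conforms_sel_branch T bsm bs l B T' :
  conforms T (TSel bsm) -> unf T (TSel bs) -> In (l, B, T') bs ->
  exists Tm', In (l, B, Tm') bsm /\ conforms T' Tm'.
Proof.
  intros Hconf Hu Hin; destruct (conforms_sel _ _ Hconf) as [bs' [Hu' [H12 _]]].
  pose proof (unf_functional _ _ _ Hu' Hu) as E; injection E as ->.
  exact (H12 _ _ _ Hin).
Qed.

Lemma conforms_bra_branch T bsm l B Tm' :
  conforms T (TBra bsm) -> In (l, B, Tm') bsm ->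
  exists bs T', unf T (TBra bs) /\ In (l, B, T') bs /\ conforms T' Tm'.
Proof.
  intros Hconf Hin; destruct (conforms_bra _ _ Hconf) as [bs [Hu [_ H21]]].
  destruct (H21 _ _ _ Hin) as [T' [Hin' Hc]]; eauto.
Qed.

Lemma synth_tsubst X R S : synth (tsubst X R S) = msubst_p X (synth R) (synth S).
Proof.
  induction S as [bs IH|bs IH|Y S IH|Y|] using stype_nested_ind; simpl;
    try rewrite Forall_forall in IH.
  - f_equal; rewrite !map_map; apply map_ext_in; intros [[l B] S] Hin; simpl.
    rewrite (IH _ Hin : synth (tsubst X R S) = _); reflexivity.
  - f_equal; rewrite !map_map; apply map_ext_in; intros [[l B] S] Hin; simpl.
    rewrite (IH _ Hin : synth (tsubst X R S) = _); reflexivity.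
  - destruct (Nat.eqb X Y); simpl; [reflexivity|rewrite IH; reflexivity].
  - destruct (Nat.eqb X Y); reflexivity.
  - reflexivity.
Qed.

(* Every occurrence of [xbind] in [synth S] is bound. *)
Lemma msubst_synth v S : msubst_v xbind v (synth S) = synth S.
Proof.
  induction S as [bs|bs|X S IH|X|]; simpl; try reflexivity.
  - f_equal; rewrite map_map; apply map_ext; intros [[l B] S]; reflexivity.
  - f_equal; rewrite map_map; apply map_ext; intros [[l B] S]; reflexivity.
  - rewrite IH; reflexivity.
Qed.

Lemma has_btypeb_iff v B : has_btypeb v B = true <-> has_btype v B.
Proof.
  revert B; induction v as [n|s|b|v1 IH1 v2 IH2]; intros [| | |B1 B2]; simpl;
    try tauto; try (split; [discriminate|tauto]).
  rewrite andb_true_iff, IH1, IH2; tauto.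
Qed.

Lemma synth_sel_step bs l v M' :
  mstep (synth (TSel bs)) (MLIn l v) M' ->
  (exists B S, In (l, B, S) bs /\
     M' = MIf (PIsValue B (AVal v)) (MUp l (AVal v) (synth S)) MNoP) \/
  (M' = MNoP /\ forall B S, ~ In (l, B, S) bs).
Proof.
  simpl; intros Hs; inversion Hs as [| | |? ? x M ? Hin| | | |? ? ? Hnot|]; subst.
  - left; apply in_map_iff in Hin as [[[l0 B] S] [E Hin]]; injection E as <- <- <-.
    exists B, S; split; [exact Hin|]; simpl; rewrite msubst_synth; reflexivity.
  - right; split; [reflexivity|]; intros B S Hin.
    exact (Hnot _ _ _ (in_map _ _ (l, B, S) Hin) eq_refl).
Qed.

Lemma synth_bra_step bs l v M' :
  mstep (synth (TBra bs)) (MLDown l v) M' ->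
  (exists B S, In (l, B, S) bs /\
     M' = MIf (PIsValue B (AVal v)) (MSel l (AVal v) (synth S)) MNoE) \/
  M' = MNoE.
Proof.
  simpl; intros Hs; inversion Hs as [| | | |? ? x M ? Hin| | | |]; subst.
  - left; apply in_map_iff in Hin as [[[l0 B] S] [E Hin]]; injection E as <- <- <-.
    exists B, S; split; [exact Hin|]; simpl; rewrite msubst_synth; reflexivity.
  - right; reflexivity.
Qed.

Lemma synth_sel_accepts bs l B S v :
  In (l, B, S) bs -> mstep (synth (TSel bs)) (MLIn l v)
    (MIf (PIsValue B (AVal v)) (MUp l (AVal v) (synth S)) MNoP).
Proof.
  intros Hin.
  pose proof (ms_in _ l xbind _ v (in_map (fun '(l, B, S') =>
    (l, xbind, MIf (PIsValue B (AVar xbind)) (MUp l (AVar xbind) (synth S')) MNoP)) _ _ Hin))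
    as Hstep.
  simpl in Hstep; rewrite msubst_synth in Hstep; exact Hstep.
Qed.

(** * Typing metatheory *)

Definition env_incl {A : Type} (E E' : list (nat * A)) : Prop :=
  forall x a, lookup E x = Some a -> lookup E' x = Some a.

Lemma env_incl_cons {A : Type} (E E' : list (nat * A)) y b :
  env_incl E E' -> env_incl ((y, b) :: E) ((y, b) :: E').
Proof. intros Hincl x a; simpl; destruct (Nat.eqb x y); auto. Qed.

Lemma env_incl_nil {A : Type} (E : list (nat * A)) : env_incl [] E.
Proof. intros x a H; discriminate. Qed.

Lemma atyped_weaken G G' a B : atyped G a B -> env_incl G G' -> atyped G' a B.
Proof. intros [x B' Hx|v B' Hv] Hincl; constructor; auto. Qed.

Lemma ptyped_weaken G G' A : ptyped G A -> env_incl G G' -> ptyped G' A.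
Proof. induction 1; intros Hincl; econstructor; eauto using atyped_weaken. Qed.

Lemma typed_weaken Th G P T Th' G' :
  typed Th G P T -> env_incl Th Th' -> env_incl G G' -> typed Th' G' P T.
Proof.
  intros HP; revert Th' G'.
  induction HP using typed_nested_ind; intros Th' G' HTh HG.
  - constructor; intros l B S HS.
    destruct (H l B S HS) as [x [P [Hin [_ IH]]]].
    exists x, P; split; [exact Hin|]; apply IH; [exact HTh|apply env_incl_cons, HG].
  - econstructor; eauto using atyped_weaken.
  - constructor; apply IHHP; [apply env_incl_cons, HTh|exact HG].
  - constructor; auto.
  - constructor; eauto using ptyped_weaken.
  - constructor.
  - econstructor; eauto.
Qed.

Lemma typed_closed_weaken Th G P T : typed [] [] P T -> typed Th G P T.
Proof. intros HP; eapply typed_weaken; eauto using env_incl_nil. Qed.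

Section ValueSubstitution.

Variables (x : var) (v : value) (B : btype).
Hypothesis Hv : has_btype v B.

Lemma atyped_vsubst G G' a C :
  atyped G' a C -> lookup G' x = Some B ->
  (forall y C, y <> x -> lookup G' y = Some C -> lookup G y = Some C) ->
  atyped G (asubst x v a) C.
Proof.
  intros [y C' Hy|w C' Hw] Hx Hother; simpl; [|constructor; exact Hw].
  destruct (Nat.eqb x y) eqn:E.
  - apply Nat.eqb_eq in E; subst; rewrite Hx in Hy; injection Hy as <-; constructor; exact Hv.
  - apply Nat.eqb_neq in E; constructor; apply Hother; auto.
Qed.

Lemma ptyped_vsubst G G' A :
  ptyped G' A -> lookup G' x = Some B ->
  (forall y C, y <> x -> lookup G' y = Some C -> lookup G y = Some C) ->
  ptyped G (predsubst x v A).
Proof. induction 1; intros; simpl; econstructor; eauto using atyped_vsubst. Qed.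

Lemma typed_vsubst Th G G' P T :
  typed Th G' P T -> lookup G' x = Some B ->
  (forall y C, y <> x -> lookup G' y = Some C -> lookup G y = Some C) ->
  typed Th G (psubst_v x v P) T.
Proof.
  intros HP; revert G; induction HP using typed_nested_ind; intros G0 Hx Hother; simpl.
  - constructor; intros l B' S HS.
    destruct (H l B' S HS) as [y [P [Hin [HP IH]]]].
    eexists y, _; split.
    { exact (in_map (fun '(l, y, Q) => (l, y, if Nat.eqb x y then Q else psubst_v x v Q))
               _ _ Hin). }
    destruct (Nat.eqb x y) eqn:E.
    + apply Nat.eqb_eq in E; subst y.
      apply (typed_weaken _ _ _ _ _ _ HP); [intros ? ? H'; exact H'|].
      intros z c; simpl; destruct (Nat.eqb z x) eqn:E'; [auto|].
      apply Nat.eqb_neq in E'; auto.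
    + apply Nat.eqb_neq in E; apply IH.
      * simpl; rewrite (proj2 (Nat.eqb_neq x y) E); exact Hx.
      * intros z C Hz; simpl; destruct (Nat.eqb z y); auto.
  - econstructor; eauto using atyped_vsubst.
  - constructor; eauto.
  - constructor; assumption.
  - constructor; eauto using ptyped_vsubst.
  - constructor.
  - econstructor; eauto.
Qed.

End ValueSubstitution.

Lemma typed_vsubst_closed x B P T v :
  typed [] [(x, B)] P T -> has_btype v B -> typed [] [] (psubst_v x v P) T.
Proof.
  intros HP Hv; eapply typed_vsubst; eauto.
  - simpl; rewrite Nat.eqb_refl; reflexivity.
  - intros y C Hne; simpl; apply Nat.eqb_neq in Hne; rewrite Hne; discriminate.
Qed.

(* Only closed processes are substituted, so no capture can occur. *)
Lemma typed_psubst Th Th' G P T X R TR :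
  typed Th G P T -> lookup Th X = Some TR ->
  (forall Y S, Y <> X -> lookup Th Y = Some S -> lookup Th' Y = Some S) ->
  typed [] [] R TR -> typed Th' G (psubst_p X R P) T.
Proof.
  intros HP; revert Th'; induction HP using typed_nested_ind; intros Th' HX Hother HR; simpl.
  - constructor; intros l B S HS.
    destruct (H l B S HS) as [x [P [Hin [_ IH]]]].
    eexists x, _; split; [exact (in_map (fun '(l, y, Q) => (l, y, psubst_p X R Q)) _ _ Hin)|].
    auto.
  - econstructor; eauto.
  - destruct (Nat.eqb X X0) eqn:E.
    + apply Nat.eqb_eq in E; subst X0; constructor.
      apply (typed_weaken _ _ _ _ _ _ HP); [|intros ? ? H'; exact H'].
      intros Y S'; simpl; destruct (Nat.eqb Y X) eqn:E'; [auto|].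
      apply Nat.eqb_neq in E'; auto.
    + constructor; apply IHHP.
      * simpl; rewrite E; exact HX.
      * intros Y S' Hne; simpl; destruct (Nat.eqb Y X0); auto.
      * exact HR.
  - destruct (Nat.eqb X X0) eqn:E.
    + apply Nat.eqb_eq in E; subst X0; rewrite HX in H; injection H as <-.
      apply typed_closed_weaken; exact HR.
    + constructor; apply Hother; [|exact H].
      intros ->; rewrite Nat.eqb_refl in E; discriminate.
  - constructor; auto.
  - constructor.
  - econstructor; eauto.
Qed.

(** * Subject reduction and progress *)

Lemma typed_sel_inv Th G l a P T :
  typed Th G (PSel l a P) T ->
  exists bs B T', unf T (TSel bs) /\ In (l, B, T') bs /\ atyped G a B /\ typed Th G P T'.
Proof.
  intros HP; remember (PSel l a P) as Q eqn:EQ; induction HP; try discriminate.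
  - injection EQ as <- <- <-; exists tbs, B, S; repeat split; try assumption; constructor.
  - destruct (IHHP EQ) as [bs [B [T' [Hu [Hin [Ha HT']]]]]].
    destruct (teq_sel_inv _ _ H (or_introl (ex_intro _ bs Hu)))
      as [bs1 [bs2 [Hu1 [Hu2 [H12 _]]]]].
    pose proof (unf_functional _ _ _ Hu1 Hu) as E; injection E as ->.
    destruct (H12 _ _ _ Hin) as [S2 [Hin2 Heq]].
    exists bs2, B, S2; repeat split; try assumption; econstructor; eassumption.
Qed.

Lemma typed_bra_inv Th G pbs T :
  typed Th G (PBra pbs) T ->
  exists bs, unf T (TBra bs) /\ forall l B T', In (l, B, T') bs ->
    exists x P, In (l, x, P) pbs /\ typed Th ((x, B) :: G) P T'.
Proof.
  intros HP; remember (PBra pbs) as P eqn:EP; induction HP; try discriminate.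
  - injection EP as <-; exists tbs; split; [constructor|assumption].
  - destruct (IHHP EP) as [bs [Hu Hbr]].
    destruct (teq_bra_inv _ _ H (or_introl (ex_intro _ bs Hu)))
      as [bs1 [bs2 [Hu1 [Hu2 [_ H21]]]]].
    pose proof (unf_functional _ _ _ Hu1 Hu) as E; injection E as ->.
    exists bs2; split; [exact Hu2|]; intros l B T' Hin.
    destruct (H21 _ _ _ Hin) as [S1 [Hin1 Heq]].
    destruct (Hbr _ _ _ Hin1) as [x [Q [HinQ HQ]]].
    exists x, Q; split; [exact HinQ|]; econstructor; eassumption.
Qed.

Lemma typed_var_inv Th G X T : typed Th G (PVar X) T -> exists S, lookup Th X = Some S.
Proof.
  intros HP; remember (PVar X) as Q eqn:EQ; induction HP; try discriminate; auto.
  injection EQ as <-; eauto.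
Qed.

Lemma typed_if_inv Th G A P1 P2 T :
  typed Th G (PIf A P1 P2) T -> ptyped G A /\ typed Th G P1 T /\ typed Th G P2 T.
Proof.
  intros HP; remember (PIf A P1 P2) as Q eqn:EQ; induction HP; try discriminate.
  - injection EQ as <- <- <-; auto.
  - destruct (IHHP EQ) as [HA [H1 H2]]; repeat split; try econstructor; eassumption.
Qed.

Lemma atyped_closed a B : atyped [] a B -> exists v, a = AVal v /\ has_btype v B.
Proof. intros [x B' Hx|v B' Hv]; [discriminate|eauto]. Qed.

Lemma ptyped_closed_eval A : ptyped [] A -> exists b, eval_pred A = Some b.
Proof.
  induction 1 as [| |a1 a2 B H1 H2|a1 a2 H1 H2|a1 a2 H1 H2|A1 A2 _ [b1 E1] _ [b2 E2]
    |A _ [b E]|B a B' H]; simpl; eauto;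
    repeat match goal with
    | H : atyped [] _ _ |- _ => apply atyped_closed in H as [? [-> ?]]
    end; simpl; eauto.
  - destruct x; try contradiction; destruct x0; try contradiction; eauto.
  - destruct x; try contradiction; destruct x0; try contradiction; eauto.
  - rewrite E1, E2; eauto.
  - rewrite E; simpl; eauto.
Qed.

Lemma typed_tau_step P T P' : typed [] [] P T -> pstep P PLTau P' -> typed [] [] P' T.
Proof.
  intros HP; remember (@nil (pvar * stype)) as Th eqn:ETh;
    remember (@nil (var * btype)) as G eqn:EG; revert P'.
  induction HP; intros P' Hs; subst;
    [inversion Hs|inversion Hs| |inversion Hs| |inversion Hs|].
  - inversion Hs; subst.
    eapply typed_psubst; [exact HP| | |constructor; exact HP].
    + simpl; rewrite Nat.eqb_refl; reflexivity.
    + intros Y S' Hne; simpl; apply Nat.eqb_neq in Hne; rewrite Hne; discriminate.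
  - inversion Hs; subst; assumption.
  - econstructor; [apply IHHP; auto|exact H].
Qed.

Lemma typed_out_step P T l v P' :
  typed [] [] P T -> pstep P (PLOut l v) P' ->
  exists bs B T', unf T (TSel bs) /\ In (l, B, T') bs /\ has_btype v B /\ typed [] [] P' T'.
Proof.
  intros HP Hs; inversion Hs; subst.
  destruct (typed_sel_inv _ _ _ _ _ _ HP) as [bs [B [T' [Hu [Hin [Ha HP']]]]]].
  inversion Ha; subst; eauto 10.
Qed.

Lemma typed_in_step P T l v P' bs B T' :
  typed [] [] P T -> nodup_proc P -> pstep P (PLIn l v) P' ->
  unf T (TBra bs) -> In (l, B, T') bs -> has_btype v B -> typed [] [] P' T'.
Proof.
  intros HP Hnd Hs Hu Hin Hv; inversion Hs as [| |pbs ? x Q ? HinQ| |]; subst.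
  destruct (typed_bra_inv _ _ _ _ HP) as [bs' [Hu' Hbr]].
  pose proof (unf_functional _ _ _ Hu' Hu) as E; injection E as ->.
  destruct (Hbr _ _ _ Hin) as [x' [Q' [HinQ' HQ']]].
  inversion Hnd as [|? Hlabels _| | | |]; subst.
  destruct (blabel_In_inj _ _ _ _ _ _ Hlabels HinQ' HinQ) as [-> ->].
  eapply typed_vsubst_closed; eassumption.
Qed.

Inductive next_move (P : proc) (T : stype) : Prop :=
| mv_nil : P = PNil -> next_move P T
| mv_tau P' : pstep P PLTau P' -> next_move P T
| mv_out l v P' bs B T' :
    pstep P (PLOut l v) P' -> unf T (TSel bs) -> In (l, B, T') bs -> next_move P T
| mv_in bs : unf T (TBra bs) ->
    (forall l B T' v, In (l, B, T') bs -> exists P', pstep P (PLIn l v) P') -> next_move P T.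

Lemma typed_progress P T : typed [] [] P T -> next_move P T.
Proof.
  intros HP; destruct P as [l a Q|pbs|X Q|X|A Q1 Q2|].
  - destruct (typed_sel_inv _ _ _ _ _ _ HP) as [bs [B [T' [Hu [Hin [Ha _]]]]]].
    apply atyped_closed in Ha as [v [-> _]].
    eapply mv_out; [constructor|exact Hu|exact Hin].
  - destruct (typed_bra_inv _ _ _ _ HP) as [bs [Hu Hbr]].
    apply (mv_in _ _ bs Hu); intros l B T' v Hin.
    destruct (Hbr _ _ _ Hin) as [x [Q [HinQ _]]].
    eexists; eapply ps_in; exact HinQ.
  - eapply mv_tau; constructor.
  - destruct (typed_var_inv _ _ _ _ HP) as [S HS]; discriminate.
  - destruct (typed_if_inv _ _ _ _ _ _ HP) as [HA _].
    destruct (ptyped_closed_eval _ HA) as [[|] Hb].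
    + eapply mv_tau; apply ps_if_t; exact Hb.
    + eapply mv_tau; apply ps_if_f; exact Hb.
  - apply mv_nil; reflexivity.
Qed.

(** * The monitor invariant *)

Definition tracks (P : proc) (Tm : stype) : Prop :=
  exists T, typed [] [] P T /\ conforms T Tm /\ nodup_stype Tm.

Definition awaits_input (P : proc) (l : label) (B : btype) (Tm : stype) : Prop :=
  exists T bs T', typed [] [] P T /\ unf T (TBra bs) /\ In (l, B, T') bs /\
    conforms T' Tm /\ nodup_stype Tm.

(* An output of a well-typed P always has the type the monitor checks for
   ([mi_check_up]), so [MNoP] is unreachable; an input from the environment
   may fail its check ([mi_check_down]) and lead to [MNoE]. *)
Inductive monitor_inv (P : proc) : mon -> Prop :=
| mi_noE : monitor_inv P MNoE
| mi_synth Tm : tracks P Tm -> monitor_inv P (synth Tm)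
| mi_check_up Tm B l v : tracks P Tm -> has_btype v B ->
    monitor_inv P (MIf (PIsValue B (AVal v)) (MUp l (AVal v) (synth Tm)) MNoP)
| mi_up Tm l v : tracks P Tm -> monitor_inv P (MUp l (AVal v) (synth Tm))
| mi_check_down Tm B l v : awaits_input P l B Tm ->
    monitor_inv P (MIf (PIsValue B (AVal v)) (MSel l (AVal v) (synth Tm)) MNoE)
| mi_down Tm B l v : awaits_input P l B Tm -> has_btype v B ->
    monitor_inv P (MSel l (AVal v) (synth Tm)).

Definition config_inv (C : proc * mon) : Prop :=
  nodup_proc (fst C) /\ monitor_inv (fst C) (snd C).

Lemma tracks_tau P P' Tm : tracks P Tm -> pstep P PLTau P' -> tracks P' Tm.
Proof. intros [T [HT Hrest]] Hs; exists T; split; [eapply typed_tau_step|]; eassumption. Qed.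

Lemma awaits_input_tau P P' l B Tm :
  awaits_input P l B Tm -> pstep P PLTau P' -> awaits_input P' l B Tm.
Proof.
  intros [T [bs [T' [HT Hrest]]]] Hs; exists T, bs, T'; split; [eapply typed_tau_step|];
    eassumption.
Qed.

Lemma monitor_inv_ptau P P' M : monitor_inv P M -> pstep P PLTau P' -> monitor_inv P' M.
Proof.
  intros Hinv Hs; destruct Hinv; econstructor; eauto using tracks_tau, awaits_input_tau.
Qed.

Lemma monitor_inv_output P P' M M' l v :
  monitor_inv P M -> pstep P (PLOut l v) P' -> mstep M (MLIn l v) M' -> monitor_inv P' M'.
Proof.
  intros Hinv HsP HsM; destruct Hinv as [|Tm [T [HT [Hc Hnd]]]| | | |]; try solve [inversion HsM].
  destruct Tm as [bsm| | | |]; try solve [inversion HsM].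
  destruct (typed_out_step _ _ _ _ _ HT HsP) as [bs [B [T' [Hu [Hin [Hv HT']]]]]].
  destruct (conforms_sel_branch _ _ _ _ _ _ Hc Hu Hin) as [Tm' [Hinm Hc']].
  inversion Hnd as [? Hlabels Hsub| | | |]; subst.
  destruct (synth_sel_step _ _ _ _ HsM) as [[B0 [S0 [Hin0 ->]]]|[_ Hnot]].
  - destruct (blabel_In_inj _ _ _ _ _ _ Hlabels Hin0 Hinm) as [-> ->].
    apply mi_check_up; [exists T'; eauto|exact Hv].
  - exfalso; exact (Hnot _ _ Hinm).
Qed.

Lemma monitor_inv_input P P' M M' l v :
  nodup_proc P -> monitor_inv P M -> pstep P (PLIn l v) P' -> mstep M (MLOut l v) M' ->
  monitor_inv P' M'.
Proof.
  intros Hnd Hinv HsP HsM; destruct Hinv as [|Tm| | | |Tm B l' v' Hawait Hv];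
    try solve [inversion HsM].
  - destruct Tm; inversion HsM.
  - inversion HsM; subst.
    destruct Hawait as [T [bs [T' [HT [Hu [Hin [Hc HndTm]]]]]]].
    apply mi_synth; exists T'; eauto using typed_in_step.
Qed.

Lemma monitor_inv_up P M M' l v :
  monitor_inv P M -> mstep M (MLUp l v) M' -> monitor_inv P M'.
Proof.
  intros Hinv Hs; destruct Hinv as [|Tm| |Tm l' v' Htr| |]; try solve [inversion Hs].
  - destruct Tm; inversion Hs.
  - inversion Hs; subst; apply mi_synth; exact Htr.
Qed.

Lemma monitor_inv_down P M M' l v :
  monitor_inv P M -> mstep M (MLDown l v) M' -> monitor_inv P M'.
Proof.
  intros Hinv Hs; destruct Hinv as [|Tm [T [HT [Hc Hnd]]]| | | |]; try solve [inversion Hs].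
  destruct Tm as [|bsm| | |]; try solve [inversion Hs].
  destruct (synth_bra_step _ _ _ _ Hs) as [[B [Tm' [Hinm ->]]]| ->]; [|constructor].
  destruct (conforms_bra_branch _ _ _ _ _ Hc Hinm) as [bs [T' [Hu [Hin Hc']]]].
  inversion Hnd as [|? _ Hsub| | |]; subst.
  apply mi_check_down; exists T, bs, T'; eauto 7.
Qed.

Lemma monitor_inv_mtau P M M' : monitor_inv P M -> mstep M MLTau M' -> monitor_inv P M'.
Proof.
  intros Hinv Hs;
    destruct Hinv as [|Tm [T [HT [Hc Hnd]]]|Tm B l v Htr Hv| |Tm B l v Hawait|];
    try solve [inversion Hs].
  - destruct Tm as [| |X S| |]; try solve [inversion Hs].
    inversion Hs; subst; inversion Hnd; subst.
    change (MRec X (synth S)) with (synth (TRec X S)); rewrite <- synth_tsubst.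
    apply mi_synth; exists T; repeat split.
    + exact HT.
    + apply conforms_unfold; exact Hc.
    + apply nodup_stype_tsubst; assumption.
  - inversion Hs as [| | | | |? ? ? _|? ? ? Hb| |]; subst; [apply mi_up; exact Htr|].
    simpl in Hb; apply has_btypeb_iff in Hv; rewrite Hv in Hb; discriminate.
  - inversion Hs as [| | | | |? ? ? Hb|? ? ? _| |]; subst; [|constructor].
    simpl in Hb; injection Hb as Hb; apply has_btypeb_iff in Hb.
    eapply mi_down; eassumption.
Qed.

Lemma config_inv_step C a C' : cstep C a C' -> config_inv C -> config_inv C'.
Proof.
  intros Hs [Hnd Hinv]; destruct Hs; simpl in *; split; eauto using nodup_proc_step.
  - eapply monitor_inv_output; eassumption.
  - eapply monitor_inv_input; eassumption.
  - eapply monitor_inv_up; eassumption.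
  - eapply monitor_inv_down; eassumption.
  - eapply monitor_inv_ptau; eassumption.
  - eapply monitor_inv_mtau; eassumption.
Qed.

Lemma config_inv_trace C t C' : wtrace C t C' -> config_inv C -> config_inv C'.
Proof. induction 1; eauto using config_inv_step. Qed.

Lemma synth_bra_moves bs : exists l v M', mstep (synth (TBra bs)) (MLDown l v) M'.
Proof.
  destruct bs as [|[[l B] S] bs].
  - exists 0, (VBool true), MNoE; apply ms_down_err; intros l' x M [].
  - exists l, (VBool true); eexists; eapply ms_down; left; reflexivity.
Qed.

Lemma mif_isvalue_moves B v M1 M2 :
  exists M', mstep (MIf (PIsValue B (AVal v)) M1 M2) MLTau M'.
Proof.
  destruct (has_btypeb v B) eqn:E; eexists; [apply ms_if_t|apply ms_if_f];
    simpl; rewrite E; reflexivity.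
Qed.

Lemma tracks_live P Tm :
  tracks P Tm -> P <> PNil -> exists a C, cstep (P, synth Tm) a C.
Proof.
  intros [T [HT [Hc _]]] Hnil; destruct Tm as [bsm|bsm|X S|X|].
  - destruct (typed_progress _ _ HT) as [Hn|P' Hs|l v P' bs B T' Hs Hu Hin|bs Hu _];
      [contradiction|exists CTau; eexists; apply cs_ptau; exact Hs| |].
    + destruct (conforms_sel_branch _ _ _ _ _ _ Hc Hu Hin) as [Tm' [Hinm _]].
      exists CTau; eexists; eapply cs_sync_out; [exact Hs|apply synth_sel_accepts; exact Hinm].
    + destruct (conforms_sel _ _ Hc) as [bs' [Hu' _]].
      pose proof (unf_functional _ _ _ Hu Hu'); discriminate.
  - destruct (synth_bra_moves bsm) as [l [v [M' Hs]]].
    eexists _, _; apply cs_down; exact Hs.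
  - exists CTau; eexists; apply cs_mtau; constructor.
  - pose proof (conforms_var _ _ Hc) as Hu'.
    destruct (typed_progress _ _ HT) as [Hn|P' Hs|l v P' bs B T' Hs Hu Hin|bs Hu _];
      [contradiction|exists CTau; eexists; apply cs_ptau; exact Hs|..];
      pose proof (unf_functional _ _ _ Hu Hu'); discriminate.
  - pose proof (conforms_end _ Hc) as Hu'.
    destruct (typed_progress _ _ HT) as [Hn|P' Hs|l v P' bs B T' Hs Hu Hin|bs Hu _];
      [contradiction|exists CTau; eexists; apply cs_ptau; exact Hs|..];
      pose proof (unf_functional _ _ _ Hu Hu'); discriminate.
Qed.

Lemma awaits_input_live P l B Tm v :
  awaits_input P l B Tm -> P <> PNil -> exists a C, cstep (P, MSel l (AVal v) (synth Tm)) a C.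
Proof.
  intros [T [bs [T' [HT [Hu [Hin _]]]]]] Hnil.
  destruct (typed_progress _ _ HT) as [Hn|P' Hs|l' v' P' bs' B' T'' Hs Hu' Hin'|bs' Hu' Hready];
    [contradiction|exists CTau; eexists; apply cs_ptau; exact Hs| |].
  - pose proof (unf_functional _ _ _ Hu Hu'); discriminate.
  - pose proof (unf_functional _ _ _ Hu' Hu) as E; injection E as ->.
    destruct (Hready _ _ _ v Hin) as [P' Hs].
    exists CTau; eexists; eapply cs_sync_in; [exact Hs|constructor].
Qed.

Lemma monitor_inv_live P M :
  monitor_inv P M -> P <> PNil -> M = MNoE \/ exists a C, cstep (P, M) a C.
Proof.
  intros Hinv Hnil; destruct Hinv as [|Tm Htr|Tm B l v _ _|Tm l v _|Tm B l v _|Tm B l v Hawait _];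
    [left; reflexivity|right..].
  - exact (tracks_live _ _ Htr Hnil).
  - destruct (mif_isvalue_moves B v (MUp l (AVal v) (synth Tm)) MNoP) as [M' Hs].
    exists CTau; eexists; apply cs_mtau; exact Hs.
  - eexists _, _; apply cs_up; constructor.
  - destruct (mif_isvalue_moves B v (MSel l (AVal v) (synth Tm)) MNoE) as [M' Hs].
    exists CTau; eexists; apply cs_mtau; exact Hs.
  - exact (awaits_input_live _ _ _ _ _ Hawait Hnil).
Qed.

Theorem mainTheorem2 :
  forall (P : proc) (S : stype) (t : list vis) (P' : proc) (M' : mon),
    wf_proc P -> wf_stype S -> closed_stype S ->
    typed nil nil P S ->
    wtrace (P, synth S) t (P', M') ->
    (forall (a : clab) (C : proc * mon), ~ cstep (P', M') a C) ->
    P' <> PNil ->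
    M' = MNoE.
Proof.
  intros P S t P' M' HwfP HwfS _ HP Htrace Hstuck Hnil.
  assert (Hinv : config_inv (P', M')).
  { apply (config_inv_trace _ _ _ Htrace); split; [apply wf_proc_nodup; exact HwfP|].
    apply mi_synth; exists S; repeat split.
    - exact HP.
    - apply conforms_refl.
    - apply wf_stype_nodup; exact HwfS. }
  destruct (monitor_inv_live _ _ (proj2 Hinv) Hnil) as [HnoE|[a [C Hs]]].
  - exact HnoE.
  - exfalso; exact (Hstuck a C Hs).
Qed.
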